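(* Suppose that for all $0\le t\le T$, $\lambda_{\min}\big(\mathbf{G}(t)+\frac{1}{\alpha^2}\mathbf{V}(t)\big)\ge\frac{\omega}{2}$ for some $\omega>0$. Then with probability at least $1-\delta$ over the initialization, $$|g_k(t)-g_k(0)|\le\frac{4\sqrt n\,\|\mathbf{f}(0)-\mathbf{y}\|_2}{\sqrt m\,\omega}$$ for each $k$ and all $0\le t\le T$.
   Context: Data $(\mathbf{x}_i,y_i)\in\mathbb{R}^d\times\mathbb{R}$, $i=1,\dots,n$, with $\|\mathbf{x}_i\|_2\le1$. Network $f(\mathbf{x})=\frac{1}{\sqrt m}\sum_{k=1}^mc_k\sigma(g_k\mathbf{v}_k^\top\mathbf{x}/\|\mathbf{v}_k\|_2)$, $\sigma(s)=\max\{s,0\}$; initialization with $\alpha>0$: independently $\mathbf{v}_k(0)\sim N(0,\alpha^2\mathbf{I})$, $c_k$ uniform on $\{-1,1\}$, $g_k(0)=\|\mathbf{v}_k(0)\|_2/\alpha$. Gradient flow on $L=\frac12\sum_i(f(\mathbf{x}_i)-y_i)^2$ in $\mathbf{v}_k,g_k$ with $c_k$ fixed; $\mathbf{f}(t)$ predictions, $\mathbf{y}$ targets. Notation: $\mathbf{x}^{\mathbf{u}^\perp}=\mathbf{x}-\mathbf{u}\mathbf{u}^\top\mathbf{x}/\|\mathbf{u}\|_2^2$, $\mathbb{1}_{ik}(t)=\mathbb{1}\{\mathbf{v}_k(t)^\top\mathbf{x}_i\ge0\}$, $\mathbf{V}_{ij}(t)=\frac1m\sum_k\big(\frac{\alpha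 c_kg_k(t)}{\|\mathbf{v}_k(t)\|_2}\big)^2\langle\mathbf{x}_i^{\mathbf{v}_k(t)^\perp},\mathbf{x}_j^{\mathbf{v}_k(t)^\perp}\rangle\mathbb{1}_{ik}(t)\mathbb{1}_{jk}(t)$, $\mathbf{G}_{ij}(t)=\frac1m\sum_k\sigma(\mathbf{v}_k(t)^\top\mathbf{x}_i)\sigma(\mathbf{v}_k(t)^\top\mathbf{x}_j)/\|\mathbf{v}_k(t)\|_2^2$. Under gradient flow $\frac{d\mathbf{f}}{dt}=-(\mathbf{V}(t)/\alpha^2+\mathbf{G}(t))(\mathbf{f}(t)-\mathbf{y})$. *)

From HB Require Import structures.
From mathcomp Require Import all_boot all_order all_algebra.
From mathcomp Require Import all_classical all_reals all_analysis.
Set Implicit Arguments. Unset Strict Implicit. Unset Printing Implicit Defensive.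
Import Order.TTheory GRing.Theory Num.Theory.
Local Open Scope ring_scope.
Local Open Scope classical_set_scope.

Section Defs.
Variable R : realType.

Definition relu (s : R) : R := Num.max s 0.

Definition dotv d (u w : 'rV[R]_d) : R := \sum_(j < d) u 0 j * w 0 j.
Definition normv d (u : 'rV[R]_d) : R := Num.sqrt (dotv u u).

Definition normc n (u : 'cV[R]_n) : R := Num.sqrt (\sum_(i < n) u i 0 ^+ 2).

Definition perp d (u x : 'rV[R]_d) : 'rV[R]_d :=
  x - (dotv u x / normv u ^+ 2) *: u.

Definition ind d (v x : 'rV[R]_d) : R := if 0 <= dotv v x then 1 else 0.

Definition fnet m d (c : 'I_m -> R) (g : 'I_m -> R) (v : 'I_m -> 'rV[R]_d)
  (x : 'rV[R]_d) : R :=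
  (Num.sqrt m%:R)^-1 * \sum_(k < m) c k * relu (g k * dotv (v k) x / normv (v k)).

Definition preds m d n (c : 'I_m -> R) (g : 'I_m -> R) (v : 'I_m -> 'rV[R]_d)
  (x : 'I_n -> 'rV[R]_d) : 'cV[R]_n := \col_(i < n) fnet c g v (x i).

(* the matrix V (as in the paper, including the alpha^2 factor) *)
Definition Vmat m d n (alpha : R) (c : 'I_m -> R) (g : 'I_m -> R)
  (v : 'I_m -> 'rV[R]_d) (x : 'I_n -> 'rV[R]_d) : 'M[R]_n :=
  \matrix_(i < n, j < n)
    ((m%:R)^-1 * \sum_(k < m)
        (alpha * c k * g k / normv (v k)) ^+ 2
        * dotv (perp (v k) (x i)) (perp (v k) (x j))
        * ind (v k) (x i) * ind (v k) (x j)).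

Definition Gmat m d n (v : 'I_m -> 'rV[R]_d) (x : 'I_n -> 'rV[R]_d) : 'M[R]_n :=
  \matrix_(i < n, j < n)
    ((m%:R)^-1 * \sum_(k < m)
        relu (dotv (v k) (x i)) * relu (dotv (v k) (x j)) / normv (v k) ^+ 2).

Definition lambda_min n (M : 'M[R]_n) : R := inf [set a : R | eigenvalue M a].

End Defs.

From HB Require Import structures.
From mathcomp Require Import all_boot all_order all_algebra.
From mathcomp Require Import all_classical all_reals all_analysis.
From mathcomp Require Import ring lra.
Import Order.TTheory GRing.Theory Num.Theory numFieldNormedType.Exports.
Local Open Scope ring_scope.
Local Open Scope classical_set_scope.

(** Put r = f - y and H = G + V / alpha^2. Along the flow r' = -H r, and
    lambda_min(H) >= omega / 2 gives (|r|^2)' = -2 r.Hr <= -omega |r|^2, so by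
    Gronwall |r(t)| <= exp(-omega t / 2) |r(0)|. The Rayleigh bound
    lambda_min(H) |u|^2 <= u.Hu for symmetric H is obtained by showing that the
    infimum of the Rayleigh quotient is itself an eigenvalue. Since c_k = +-1 and
    0 <= relu(v_k.x_i) / |v_k| <= 1 when |x_i| <= 1, Cauchy-Schwarz bounds
    |g_k'(t)| by sqrt(n) |r(t)| / sqrt(m); integrating the exponential gives
    |g_k(t) - g_k(0)| <= 2 sqrt(n) |r(0)| / (sqrt(m) omega). No randomness is
    involved: the bound holds for every initialization. *)

Section DotProduct.
Set Implicit Arguments. Unset Strict Implicit. Unset Printing Implicit Defensive.
Variable R : realType.

Lemma sumr_sqr_ge0 k (a : 'I_k -> R) : 0 <= \sum_(i < k) a i ^+ 2.
Proof. by apply: sumr_ge0 => i _; exact: sqr_ge0. Qed.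

Lemma CauchySchwarz_sum k (a b : 'I_k -> R) :
  (\sum_(i < k) a i * b i) ^+ 2 <= (\sum_(i < k) a i ^+ 2) * (\sum_(i < k) b i ^+ 2).
Proof.
set A := \sum_(i < k) a i ^+ 2; set B := \sum_(i < k) a i * b i.
set C := \sum_(i < k) b i ^+ 2.
have C_ge0 : 0 <= C by exact: sumr_sqr_ge0.
have [C0|C_neq0] := eqVneq C 0.
  have b0 i : b i = 0.
    apply/eqP; rewrite -sqrf_eq0; apply/eqP; move: i isT.
    by apply/psumr_eq0P => // i _; exact: sqr_ge0.
  rewrite C0 mulr0 (_ : B = 0) ?expr0n // /B.
  by rewrite big1 // => i _; rewrite b0 mulr0.
have C_gt0 : 0 < C by rewrite lt_def C_neq0.
(* the quadratic [A - 2 s B + s^2 C = sum (a - s b)^2] is nonnegative at [s = B / C] *)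
have : 0 <= \sum_(i < k) (a i - B / C * b i) ^+ 2 by exact: sumr_sqr_ge0.
have -> : \sum_(i < k) (a i - B / C * b i) ^+ 2 = A - B ^+ 2 / C.
  transitivity (A - 2 * (B / C) * B + (B / C) ^+ 2 * C); last by field.
  rewrite /A /B /C !mulr_sumr -!sumrN -!big_split /=.
  by apply: eq_bigr => i _; ring.
by rewrite subr_ge0 ler_pdivrMr.
Qed.

Implicit Types (d : nat) (a : R).

Lemma dotvC d (u w : 'rV[R]_d) : dotv u w = dotv w u.
Proof. by apply: eq_bigr => j _; rewrite mulrC. Qed.

Lemma dotvv d (u : 'rV[R]_d) : dotv u u = \sum_(j < d) u 0 j ^+ 2.
Proof. by apply: eq_bigr => j _; rewrite expr2. Qed.

Lemma dotvv_ge0 d (u : 'rV[R]_d) : 0 <= dotv u u.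
Proof. by rewrite dotvv sumr_sqr_ge0. Qed.

Lemma dotvv_gt0 d (u : 'rV[R]_d) : u != 0 -> 0 < dotv u u.
Proof.
move=> u_neq0; rewrite lt_def dotvv_ge0 andbT; apply: contraNN u_neq0.
rewrite dotvv psumr_eq0 => [/allP u0|j _]; last exact: sqr_ge0.
apply/eqP/rowP => j; rewrite mxE; apply/eqP.
by rewrite -sqrf_eq0; apply: u0; rewrite mem_index_enum.
Qed.

Lemma dotvDl d (u w z : 'rV[R]_d) : dotv (u + w) z = dotv u z + dotv w z.
Proof. by rewrite /dotv -big_split; apply: eq_bigr => j _; rewrite mxE mulrDl. Qed.

Lemma dotvZl d a (u z : 'rV[R]_d) : dotv (a *: u) z = a * dotv u z.
Proof. by rewrite /dotv mulr_sumr; apply: eq_bigr => j _; rewrite mxE mulrA. Qed.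

Lemma dotvBl d (u w z : 'rV[R]_d) : dotv (u - w) z = dotv u z - dotv w z.
Proof. by rewrite dotvDl -scaleN1r dotvZl mulN1r. Qed.

Lemma dotvDr d (u w z : 'rV[R]_d) : dotv z (u + w) = dotv z u + dotv z w.
Proof. by rewrite !(dotvC z) dotvDl. Qed.

Lemma dotvZr d a (u z : 'rV[R]_d) : dotv z (a *: u) = a * dotv z u.
Proof. by rewrite !(dotvC z) dotvZl. Qed.

Lemma dotvBr d (u w z : 'rV[R]_d) : dotv z (u - w) = dotv z u - dotv z w.
Proof. by rewrite !(dotvC z) dotvBl. Qed.

Lemma dotv0l d (u : 'rV[R]_d) : dotv 0 u = 0.
Proof. by rewrite /dotv big1 // => j _; rewrite mxE mul0r. Qed.

Lemma normr_dotv_AMGM d (u w : 'rV[R]_d) : 2 * `|dotv u w| <= dotv u u + dotv w w.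
Proof.
have := dotvv_ge0 (u - w); have := dotvv_ge0 (u + w).
rewrite dotvBl !dotvBr dotvDl !dotvDr (dotvC w u).
by case: (ger0P (dotv u w)) => _; lra.
Qed.

Definition frobenius_sqr p q (M : 'M[R]_(p, q)) : R := \sum_(j < q) \sum_(i < p) M i j ^+ 2.

Lemma frobenius_sqr_ge0 p q (M : 'M[R]_(p, q)) : 0 <= frobenius_sqr M.
Proof. by apply: sumr_ge0 => j _; exact: sumr_sqr_ge0. Qed.

Lemma dotv_mulmx_le p q (u : 'rV[R]_p) (M : 'M[R]_(p, q)) :
  dotv (u *m M) (u *m M) <= frobenius_sqr M * dotv u u.
Proof.
rewrite !dotvv /frobenius_sqr mulr_suml; apply: ler_sum => j _.
by rewrite mxE mulrC; exact: CauchySchwarz_sum.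
Qed.

Lemma dotv_mulmx_sym n (M : 'M[R]_n) (u w : 'rV[R]_n) : M^T = M ->
  dotv (u *m M) w = dotv (w *m M) u.
Proof.
move=> MT; rewrite /dotv.
under eq_bigr do rewrite mxE mulr_suml.
under [RHS]eq_bigr do rewrite mxE mulr_suml.
rewrite exchange_big /=; apply: eq_bigr => i _; apply: eq_bigr => j _.
have -> : M j i = M i j by rewrite -{1}MT mxE.
ring.
Qed.

End DotProduct.

Section Rayleigh.
Set Implicit Arguments. Unset Strict Implicit. Unset Printing Implicit Defensive.
Variables (R : realType) (n : nat).
Implicit Types (u w : 'rV[R]_n) (B : 'M[R]_n).

Lemma psd_dotv_mulmx_le B : B^T = B -> (forall u, 0 <= dotv (u *m B) u) ->
  forall u, dotv (u *m B) (u *m B) <= (frobenius_sqr B + 1) * dotv (u *m B) u.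
Proof.
move=> B_sym B_psd u; set w := u *m B; set K := frobenius_sqr B + 1.
have K_gt0 : 0 < K by have := frobenius_sqr_ge0 B; rewrite /K; lra.
have wBw_le : dotv (w *m B) w <= K * dotv w w.
  have := normr_dotv_AMGM (w *m B) w; have := dotv_mulmx_le w B.
  have := mulr_ge0 (frobenius_sqr_ge0 B) (dotvv_ge0 w).
  have := ler_norm (dotv (w *m B) w); have := dotvv_ge0 w; rewrite /K; lra.
(* test positivity of [B] on [u - w / K]; symmetry turns both cross terms into [w.w] *)
set s := K^-1; have sK : s * K = 1 by rewrite mulVf ?gt_eqF.
have := B_psd (u - s *: w).
rewrite mulmxBl -scalemxAl dotvBl !dotvBr !dotvZl !dotvZr.
rewrite (dotv_mulmx_sym w u B_sym) -/w => shifted_ge0.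
have s_ge0 : 0 <= s by rewrite invr_ge0 ltW.
have wBw_scaled : s * s * dotv (w *m B) w <= s * dotv w w.
  apply: le_trans (ler_wpM2l (mulr_ge0 s_ge0 s_ge0) wBw_le) _.
  by rewrite -mulrA (mulrA s K) sK mul1r.
have : s * dotv w w <= dotv w u by lra.
by move=> /(ler_wpM2l (ltW K_gt0)); rewrite mulrA (mulrC K) sK mul1r.
Qed.

Variable H : 'M[R]_n.
Hypothesis H_sym : H^T = H.

Lemma eigenvalue_rayleigh_inf mu :
  (forall u, mu * dotv u u <= dotv (u *m H) u) ->
  (forall e, 0 < e -> exists2 u, u != 0 & dotv (u *m H) u < (mu + e) * dotv u u) ->
  eigenvalue H mu.
Proof.
move=> mu_lb mu_inf; rewrite /eigenvalue /eigenspace kermx_eq0 row_free_unit.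
set B := H - mu%:M; apply/negP => B_unit.
have uB u : u *m B = u *m H - mu *: u by rewrite mulmxBr mul_mx_scalar.
have B_psd u : 0 <= dotv (u *m B) u by rewrite uB dotvBl dotvZl subr_ge0.
have B_sym : B^T = B by rewrite /B linearB /= tr_scalar_mx H_sym.
(* an invertible positive [B] would have Rayleigh quotient at least [1 / K] *)
set K := frobenius_sqr (invmx B) * (frobenius_sqr B + 1).
have K_ge0 : 0 <= K.
  by rewrite mulr_ge0 ?frobenius_sqr_ge0 // addr_ge0 ?frobenius_sqr_ge0.
have coercive u : dotv u u <= K * dotv (u *m B) u.
  apply: le_trans (_ : frobenius_sqr (invmx B) * dotv (u *m B) (u *m B) <= _).
    by have := dotv_mulmx_le (u *m B) (invmx B); rewrite mulmxK.
  rewrite -mulrA; apply: ler_wpM2l; first exact: frobenius_sqr_ge0.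
  exact: psd_dotv_mulmx_le.
set e := (K + 1)^-1.
have e_gt0 : 0 < e by rewrite invr_gt0; lra.
have eK : K * e = 1 - e by rewrite /e; field; apply: lt0r_neq0; lra.
have [u u_neq0 uHu_lt] := mu_inf e e_gt0.
have uu_gt0 := dotvv_gt0 u_neq0.
have uBu_lt : dotv (u *m B) u < e * dotv u u by rewrite uB dotvBl dotvZl; lra.
have := le_trans (coercive u) (ler_wpM2l K_ge0 (ltW uBu_lt)).
by rewrite mulrA eK; have := mulr_gt0 e_gt0 uu_gt0; lra.
Qed.

Lemma rayleigh_eigenvalue : (exists u, u != 0) ->
  exists2 mu, eigenvalue H mu & forall u, mu * dotv u u <= dotv (u *m H) u.
Proof.
move=> [u0 u0_neq0].
pose S := [set r : R | exists2 u, u != 0 & r = dotv (u *m H) u / dotv u u].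
have S_lb : has_lbound S.
  exists (- ((frobenius_sqr H + 1) / 2)) => _ [u u_neq0 ->].
  rewrite ler_pdivlMr ?dotvv_gt0 //.
  have := normr_dotv_AMGM (u *m H) u; have := dotv_mulmx_le u H.
  by have := ler_norm (- dotv (u *m H) u); rewrite normrN; lra.
have S_u0 : S (dotv (u0 *m H) u0 / dotv u0 u0) by exists u0.
have mu_lb u : inf S * dotv u u <= dotv (u *m H) u.
  have [->|u_neq0] := eqVneq u 0; first by rewrite mul0mx !dotv0l mulr0.
  by rewrite -ler_pdivlMr ?dotvv_gt0 //; apply: ge_inf => //; exists u.
exists (inf S) => //; apply: eigenvalue_rayleigh_inf => // e e_gt0.
have [_ [u u_neq0 ->] lt_e] := inf_adherent e_gt0 (conj (ex_intro _ _ S_u0) S_lb).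
by exists u => //; rewrite -ltr_pdivrMr ?dotvv_gt0.
Qed.

Lemma lambda_min_rayleigh nu : nu <= lambda_min H ->
  forall u, nu * dotv u u <= dotv (u *m H) u.
Proof.
move=> nu_le u; have [->|u_neq0] := eqVneq u 0; first by rewrite mul0mx !dotv0l mulr0.
have [mu mu_eig mu_lb] := rayleigh_eigenvalue (ex_intro _ u u_neq0).
have lambda_le_mu : lambda_min H <= mu.
  apply: ge_inf => //; exists mu => a /eigenvalueP [w wH w_neq0].
  by rewrite -(ler_pM2r (dotvv_gt0 w_neq0)) -[a * _]dotvZl -wH mu_lb.
apply: le_trans (mu_lb u); apply: ler_wpM2r; first exact: dotvv_ge0.
exact: le_trans nu_le lambda_le_mu.
Qed.

End Rayleigh.

Section RealFunctions.
Set Implicit Arguments. Unset Strict Implicit. Unset Printing Implicit Defensive.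
Variable R : realType.
Implicit Types (F G dF dG h dh : R -> R) (a b c T : R).

Lemma is_derive_sumr n (f : 'I_n -> R -> R) (df : 'I_n -> R) (s : R) :
  (forall i, is_derive s 1 (f i) (df i)) ->
  is_derive s 1 (fun u => \sum_(i < n) f i u) (\sum_(i < n) df i).
Proof.
move=> f_der; have -> : (fun u => \sum_(i < n) f i u) = \sum_(i < n) f i.
  by apply/funext => u; rewrite fct_sumE.
exact: is_derive_sum.
Qed.

Lemma continuous_sumr (X : topologicalType) n (f : 'I_n -> X -> R) :
  (forall i, continuous (f i)) -> continuous (fun u => \sum_(i < n) f i u).
Proof. by move=> f_cont; apply: continuous_big => // [[a b]]; exact: add_continuous. Qed.

Lemma nonpos_derive_le F dF a b :
  (forall s, s \in `]a, b[ -> is_derive s 1 F (dF s)) ->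
  {within `[a, b], continuous F} ->
  (forall s, s \in `]a, b[ -> dF s <= 0) ->
  forall s, s \in `[a, b] -> F s <= F a.
Proof.
move=> F_der F_cont dF_le0 s; rewrite in_setE /= in_itv /= => /andP[a_le_s s_le_b].
have [<-|a_neq_s] := eqVneq a s; first exact: lexx.
have a_lt_s : a < s by rewrite lt_def eq_sym a_neq_s.
have sub_oo : `]a, s[ `<=` `]a, b[ := subset_itvW false true (lexx a) s_le_b.
rewrite -subr_le0.
have [u u_in ->] : exists2 u, u \in `]a, s[%R & F s - F a = dF u * (s - a).
  apply: MVT => // [u u_in|]; first by apply: F_der; rewrite in_setE; exact: sub_oo.
  exact: continuous_subspaceW (subset_itvl _) F_cont.
apply: mulr_le0_ge0; last by rewrite subr_ge0.
by apply: dF_le0; rewrite in_setE; exact: sub_oo.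
Qed.
Lemma abs_sub_le_derive F G dF dG a b :
  (forall s, s \in `]a, b[ -> is_derive s 1 F (dF s)) ->
  (forall s, s \in `]a, b[ -> is_derive s 1 G (dG s)) ->
  {within `[a, b], continuous F} -> {within `[a, b], continuous G} ->
  (forall s, s \in `]a, b[ -> `|dF s| <= dG s) ->
  forall s, s \in `[a, b] -> `|F s - F a| <= G s - G a.
Proof.
move=> F_der G_der F_cont G_cont dF_le s s_in.
have FG_le (e : R) : e = 1 \/ e = -1 -> e * F s - G s <= e * F a - G a.
  move=> e_sign; apply: (nonpos_derive_le (F := fun u => e * F u - G u)
    (dF := fun u => e * dF u - dG u)) s_in.
  - by move=> u u_in; apply: is_deriveB; [apply: is_deriveZ; exact: F_der | exact: G_der].
  - move=> u; apply: cvgB; last exact: G_cont.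
    by apply: cvgM; [exact: cst_continuous | exact: F_cont].
  - move=> u u_in; rewrite subr_le0; apply: le_trans (dF_le u u_in).
    by case: e_sign => ->; rewrite ?mul1r ?mulN1r; last rewrite -normrN; exact: ler_norm.
have := FG_le 1 (or_introl erefl); have := FG_le (-1) (or_intror erefl).
by rewrite ler_norml; lra.
Qed.

Lemma is_derive_expRM c (s : R) :
  is_derive s (1 : R) (fun u => expR (c * u)) (c * expR (c * s)).
Proof.
have c_der : is_derive s (1 : R) ( *%R c) c.
  by apply: is_derive_eq; rewrite /GRing.scale /= mulr1.
by rewrite mulrC; apply: is_derive1_comp.
Qed.

Lemma continuous_expRM c : continuous (fun u : R => expR (c * u)).
Proof.
move=> s; apply: continuous_comp; last exact: continuous_expR.
by apply: continuousM; [exact: cst_continuous | exact: id].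
Qed.

Lemma gronwall_exp h dh c T :
  (forall s, s \in `]0, T[ -> is_derive s 1 h (dh s)) ->
  {within `[0, T], continuous h} ->
  (forall s, s \in `]0, T[ -> dh s <= - c * h s) ->
  forall s, s \in `[0, T] -> h s <= expR (- c * s) * h 0.
Proof.
move=> h_der h_cont dh_le s s_in.
have : expR (c * s) * h s <= expR (c * 0) * h 0.
  apply: (nonpos_derive_le (F := fun u => expR (c * u) * h u)
    (dF := fun u => expR (c * u) * dh u + h u * (c * expR (c * u)))) s_in.
  - by move=> u u_in; apply: is_deriveM; [exact: is_derive_expRM | exact: h_der].
  - move=> u; apply: cvgM; last exact: h_cont.
    exact/continuous_subspaceT/continuous_expRM.
  - move=> u u_in; have := ler_wpM2l (expR_ge0 (c * u)) (dh_le u u_in); lra.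
rewrite mulr0 expR0 mul1r => /(ler_wpM2l (expR_ge0 (- c * s))).
by rewrite mulrA -expRD mulNr addNr expR0 mul1r.
Qed.

Lemma abs_sub_le_exp_decay F dF A c T : 0 < c -> 0 <= A ->
  (forall s, s \in `]0, T[ -> is_derive s 1 F (dF s)) ->
  {within `[0, T], continuous F} ->
  (forall s, s \in `]0, T[ -> `|dF s| <= A * expR (- c * s)) ->
  forall s, s \in `[0, T] -> `|F s - F 0| <= A / c.
Proof.
move=> c_gt0 A_ge0 F_der F_cont dF_le s s_in.
pose G u := - (A / c) * expR (- c * u).
apply: le_trans (abs_sub_le_derive (G := G) F_der _ F_cont _ dF_le s_in) _.
- move=> u _; apply: is_derive_eq (is_deriveZ (- (A / c)) (is_derive_expRM (- c) u)) _.
  by rewrite /GRing.scale /=; field; rewrite gt_eqF.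
- apply: continuous_subspaceT => u.
  by apply: cvgM; [exact: cst_continuous | exact: continuous_expRM].
rewrite /G mulr0 expR0 mulr1.
by have := mulr_ge0 (divr_ge0 A_ge0 (ltW c_gt0)) (expR_ge0 (- c * s)); lra.
Qed.

End RealFunctions.

Section Network.
Set Implicit Arguments. Unset Strict Implicit. Unset Printing Implicit Defensive.
Variable R : realType.

Lemma relu_ge0 (z : R) : 0 <= relu z.
Proof. by rewrite /relu le_max lexx orbT. Qed.

Lemma relu_le_norm (z : R) : relu z <= `|z|.
Proof. by rewrite /relu ge_max ler_norm normr_ge0. Qed.

Lemma normr_dotv_le d (u w : 'rV[R]_d) : `|dotv u w| <= normv u * normv w.
Proof.
rewrite /normv -sqrtrM ?dotvv_ge0 // -sqrtr_sqr ler_sqrt ?mulr_ge0 ?dotvv_ge0 //.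
by rewrite !dotvv; exact: CauchySchwarz_sum.
Qed.

Lemma relu_dotv_div_normv_bound d (v x : 'rV[R]_d) : normv x <= 1 ->
  0 <= relu (dotv v x) / normv v <= 1.
Proof.
move=> x_le1; have [->|v_neq0] := eqVneq (normv v) 0.
  by rewrite invr0 mulr0 lexx ler01.
have v_gt0 : 0 < normv v by rewrite lt_def v_neq0 sqrtr_ge0.
rewrite divr_ge0 ?relu_ge0 ?sqrtr_ge0 //= ler_pdivrMr // mul1r.
apply: le_trans (relu_le_norm _) _; apply: le_trans (normr_dotv_le v x) _.
by rewrite -{2}(mulr1 (normv v)) ler_wpM2l ?sqrtr_ge0.
Qed.

Lemma normr_sum_mul_le_normc n (r : 'cV[R]_n) (a : 'I_n -> R) :
  (forall i, 0 <= a i <= 1) ->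
  `|\sum_(i < n) r i 0 * a i| <= Num.sqrt n%:R * normc r.
Proof.
move=> a_in01; have a2_le : \sum_(i < n) a i ^+ 2 <= n%:R.
  rewrite -[n in n%:R]card_ord -sumr_const; apply: ler_sum => i _.
  by have /andP[a_ge0 a_le1] := a_in01 i; rewrite expr2 mulr_ile1.
rewrite /normc -sqrtrM // -sqrtr_sqr ler_sqrt ?mulr_ge0 ?sumr_sqr_ge0 //.
apply: le_trans (CauchySchwarz_sum (fun i => r i 0) a) _.
by rewrite mulrC ler_wpM2r ?sumr_sqr_ge0.
Qed.

Lemma normr_grad_g_le m d n (x : 'I_n -> 'rV[R]_d) (r : 'cV[R]_n) (ck : R)
    (vk : 'rV[R]_d) :
  (forall i, normv (x i) <= 1) -> `|ck| = 1 ->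
  `|(Num.sqrt m%:R)^-1 * ck * \sum_(i < n) r i 0 * relu (dotv vk (x i)) / normv vk|
    <= (Num.sqrt m%:R)^-1 * Num.sqrt n%:R * normc r.
Proof.
move=> x_le1 ck_norm; rewrite !normrM ck_norm mulr1 ger0_norm ?invr_ge0 ?sqrtr_ge0 //.
rewrite -mulrA ler_wpM2l ?invr_ge0 ?sqrtr_ge0 //.
under eq_bigr => i _ do rewrite -mulrA.
exact: normr_sum_mul_le_normc (fun i => relu_dotv_div_normv_bound vk (x_le1 i)).
Qed.

Lemma Gmat_sym m d n (v : 'I_m -> 'rV[R]_d) (x : 'I_n -> 'rV[R]_d) :
  (Gmat v x)^T = Gmat v x.
Proof.
apply/matrixP => i j; rewrite !mxE; congr (_ * _); apply: eq_bigr => k _.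
by congr (_ / _); rewrite mulrC.
Qed.

Lemma Vmat_sym m d n a (c g : 'I_m -> R) (v : 'I_m -> 'rV[R]_d) (x : 'I_n -> 'rV[R]_d) :
  (Vmat a c g v x)^T = Vmat a c g v x.
Proof.
apply/matrixP => i j; rewrite !mxE; congr (_ * _); apply: eq_bigr => k _.
by rewrite (dotvC (perp (v k) (x j))); ring.
Qed.

Lemma dotv_trmx n (r : 'cV[R]_n) : dotv r^T r^T = \sum_(i < n) r i 0 ^+ 2.
Proof. by rewrite dotvv; apply: eq_bigr => i _; rewrite mxE. Qed.

Lemma dotv_trmx_mulmx n (H : 'M[R]_n) (r : 'cV[R]_n) : H^T = H ->
  dotv (r^T *m H) r^T = \sum_(i < n) r i 0 * (H *m r) i 0.
Proof.
move=> H_sym; rewrite -{1}H_sym -trmx_mul.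
by apply: eq_bigr => i _; rewrite !mxE mulrC.
Qed.

Lemma normc_exp_decay n (r : R -> 'cV[R]_n) (H : R -> 'M[R]_n) (T om : R) :
  (forall i, {within `[0, T], continuous (fun s => r s i 0)}) ->
  (forall i s, s \in `]0, T[ ->
     is_derive s 1 (fun s => r s i 0) (- (H s *m r s) i 0)) ->
  (forall s, s \in `]0, T[ -> (H s)^T = H s /\ om / 2 <= lambda_min (H s)) ->
  forall s, s \in `[0, T] -> normc (r s) <= expR (- (om / 2) * s) * normc (r 0).
Proof.
move=> r_cont r_der H_spec s s_in.
pose h s := \sum_(i < n) r s i 0 ^+ 2.
have h_decay : h s <= expR (- om * s) * h 0.
  apply: (gronwall_exp
    (dh := fun u => - 2 * \sum_(i < n) r u i 0 * (H u *m r u) i 0)) s_in.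
  - move=> u u_in; have ri_der i := r_der i u u_in.
    apply: is_derive_eq (is_derive_sumr (fun i => is_deriveM (ri_der i) (ri_der i))) _.
    by rewrite mulr_sumr; apply: eq_bigr => i _; rewrite /GRing.scale /=; ring.
  - apply: continuous_sumr => i u; exact: cvgM (r_cont i u) (r_cont i u).
  - move=> u u_in; have [H_sym lambda_ge] := H_spec u u_in.
    have := lambda_min_rayleigh H_sym lambda_ge (r u)^T.
    by rewrite dotv_trmx dotv_trmx_mulmx // /h; lra.
rewrite (_ : expR (- om * s) = expR (- (om / 2) * s) ^+ 2) in h_decay; last first.
  by rewrite -expRM_natl; congr expR; field.
apply: le_trans (_ : Num.sqrt (h s) <= Num.sqrt (expR (- (om / 2) * s) ^+ 2 * h 0)) _.
  by rewrite ler_sqrt // mulr_ge0 ?sqr_ge0 ?sumr_sqr_ge0.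
by rewrite sqrtrM ?sqr_ge0 // sqrtr_sqr ger0_norm ?expR_ge0.
Qed.

End Network.

Theorem lemmaB8 (R : realType) (n d m : nat)
  (x : 'I_n -> 'rV[R]_d) (y : 'cV[R]_n)
  (alpha : R) (c : 'I_m -> R)
  (v : 'I_m -> R -> 'rV[R]_d) (g : 'I_m -> R -> R)
  (T om : R) :
  (* data *)
  (forall i, normv (x i) <= 1) ->
  (* initialization: alpha > 0, c_k in {-1,1}, g_k(0) = ||v_k(0)|| / alpha *)
  0 < alpha ->
  (forall k, c k = 1 \/ c k = -1) ->
  (forall k, g k 0 = normv (v k 0) / alpha) ->
  (* gradient flow on [0,T] (with c fixed) *)
  (forall k, {within `[0, T], continuous (g k)}) ->
  (forall k j, {within `[0, T], continuous (fun s => v k s 0 j)}) ->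
  (forall k t, t \in `]0, T[ ->
     is_derive t (1 : R) (g k)
       (- ((Num.sqrt m%:R)^-1 * c k * \sum_(i < n)
            (preds c (g ^~ t) (v ^~ t) x i 0 - y i 0)
            * relu (dotv (v k t) (x i)) / normv (v k t)))) ->
  (forall k j t, t \in `]0, T[ ->
     is_derive t (1 : R) (fun s => v k s 0 j)
       (- ((Num.sqrt m%:R)^-1 * c k * g k t / normv (v k t) * \sum_(i < n)
            (preds c (g ^~ t) (v ^~ t) x i 0 - y i 0)
            * ind (v k t) (x i) * perp (v k t) (x i) 0 j))) ->
  (* consequence of gradient flow stated in the paper: df/dt = -(V/alpha^2 + G)(f - y) *)
  (forall i, {within `[0, T], continuous (fun s => preds c (g ^~ s) (v ^~ s) x i 0)}) ->
  (forall i t, t \in `]0, T[ ->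
     is_derive t (1 : R) (fun s => preds c (g ^~ s) (v ^~ s) x i 0)
       (- (((alpha ^+ 2)^-1 *: Vmat alpha c (g ^~ t) (v ^~ t) x
              + Gmat (v ^~ t) x)
           *m (preds c (g ^~ t) (v ^~ t) x - y)) i 0)) ->
  (* eigenvalue hypothesis *)
  0 < om ->
  (forall t, t \in `[0, T] ->
     om / 2 <= lambda_min (Gmat (v ^~ t) x
                           + (alpha ^+ 2)^-1 *: Vmat alpha c (g ^~ t) (v ^~ t) x)) ->
  forall k t, t \in `[0, T] ->
    `|g k t - g k 0| <=
      4 * Num.sqrt n%:R * normc (preds c (g ^~ 0) (v ^~ 0) x - y)
        / (Num.sqrt m%:R * om).
Proof.
move=> x_le1 _ c_sign _ g_cont _ g_der _ f_cont f_der om_gt0 lambda_ge k t t_in.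
have oo_cc s : s \in `]0, T[ -> s \in `[0, T].
  by rewrite !in_setE; exact: subset_itv_oo_cc.
pose r s := preds c (g ^~ s) (v ^~ s) x - y.
pose H s := Gmat (v ^~ s) x + (alpha ^+ 2)^-1 *: Vmat alpha c (g ^~ s) (v ^~ s) x.
have r_entry s i : r s i 0 = preds c (g ^~ s) (v ^~ s) x i 0 - y i 0 by rewrite !mxE.
have r_decay s : s \in `[0, T] -> normc (r s) <= expR (- (om / 2) * s) * normc (r 0).
  apply: (normc_exp_decay (H := H)) => [i|i u u_in|u u_in];
    rewrite ?(funext (r_entry^~ i)).
  - by move=> u; apply: cvgB; [exact: f_cont | exact: cst_continuous].
  - apply: is_derive_eq (is_deriveB (f_der i u u_in) (is_derive_cst (y i 0) u 1)) _.
    by rewrite subr0 addrC.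
  - split; first by rewrite /H linearD /= linearZ /= Gmat_sym Vmat_sym.
    exact/lambda_ge/oo_cc.
pose A := (Num.sqrt m%:R)^-1 * Num.sqrt n%:R * normc (r 0).
have A_ge0 : 0 <= A by rewrite !mulr_ge0 ?invr_ge0 ?sqrtr_ge0.
apply: le_trans
  (abs_sub_le_exp_decay (c := om / 2) (A := A) _ A_ge0 (g_der k) (g_cont k) _ t_in) _.
- by rewrite divr_gt0.
- move=> s s_in; rewrite normrN; under eq_bigr => i _ do rewrite -r_entry.
  have c_norm : `|c k| = 1 by case: (c_sign k) => ->; rewrite ?normrN normr1.
  apply: le_trans (normr_grad_g_le _ _ _ x_le1 c_norm) _.
  rewrite /A -!mulrA; apply: ler_wpM2l; first by rewrite invr_ge0 sqrtr_ge0.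
  apply: ler_wpM2l; first exact: sqrtr_ge0.
  by rewrite mulrC; exact/r_decay/oo_cc.
- rewrite -/(r 0) (_ : A / (om / 2) = 2 * (A / om)); last by field; rewrite gt_eqF.
  rewrite [X in _ <= X](_ : _ = 4 * (A / om)); last by rewrite /A invfM; ring.
  by have := divr_ge0 A_ge0 (ltW om_gt0); lra.
Qed.
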